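(* Let $\odot$ be a non-degenerate pseudo-multiplication, and let $\tau$ be a $\sigma$-maxitive measure on a $\sigma$-algebra $\mathcal{B}$ of subsets of a nonempty set $E$. Then $\tau$ has the Radon–Nikodym property with respect to the idempotent $\odot$-integral if and only if $\tau$ is $\sigma$-$\odot$-finite and $\sigma$-principal.
   Context: Write $\overline{\mathbb{R}}_+=[0,\infty]$ and $\oplus$ for the supremum. A pseudo-multiplication is a binary operation $\odot$ on $\overline{\mathbb{R}}_+$ with the following properties: - it is associative; - it is continuous on $(0,\infty)\times[0,\infty]$; - for every $t$, the map $s\mapsto s\odot t$ is continuous on $(0,\infty]$; - it is nondecreasing in each argument; - it has a left identity $1_\odot$, i.e. $1_\odot\odot t=t$ for all $t$; - it has no zero divisors, i.e. $s\odot t=0$ implies $s=0$ or $t=0$; - $0\odot t=t\odot 0=0$ for all $t$. Put $O(t)=\inf_{s>0}s\odot t$. An element $t$ is $\odot$-finite if $O(t)=0$, and $\odot$-infinite otherwise. The operation $\odot$ is non-degenerate if $1_\odot$ is $\odot$-finite. Let $\mathcal{B}$ be a $\sigma$-algebra on $E$. A $\sigma$-ideal of $\mathcal{B}$ is a nonempty $\mathcal{I}\subset\mathcal{B}$ that is closed under countable unions and satisfies: $A\subset B\in\mathcal{I}$ with $A\in\mathcal{B}$ implies $A\in\mathcal{I}$. A $\sigma$-maxitive measure on $\mathcal{B}$ is a map $\nu:\mathcal{B}\to\overline{\mathbb{R}}_+$ with $\nu(\emptyset)=0$ and $\nu(\bigcup_{j\in J}B_j)=\sup_{j\in J}\nu(B_j)$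 for every countable family $(B_j)_{j\in J}$ in $\mathcal{B}$. A set $N\subset E$ is $\tau$-negligible if $N\subset B$ for some $B\in\mathcal{B}$ with $\tau(B)=0$. A map $f:E\to\overline{\mathbb{R}}_+$ is $\mathcal{B}$-measurable if $\{f>t\}\in\mathcal{B}$ for all $t\in[0,\infty)$. The idempotent $\odot$-integral of such $f$ over $B\in\mathcal{B}$ is $\int^\infty_B f\odot d\nu=\sup_{t\in[0,\infty)} t\odot\nu(B\cap\{f>t\})$. Let $\nu,\tau$ be $\sigma$-maxitive measures on $\mathcal{B}$. - $\nu$ has a density with respect to $\tau$ if there is a $\mathcal{B}$-measurable $c:E\to\overline{\mathbb{R}}_+$ with $\nu(B)=\int^\infty_B c\odot d\tau$ for all $B\in\mathcal{B}$. - $\nu$ is $\odot$-absolutely continuous with respect to $\tau$, written $\nu\ll_\odot\tau$, if $\nu(B)\le\infty\odot\tau(B)$ for every $B\in\mathcal{B}$ such that $\tau(B)$ is $\odot$-finite. - $\tau$ has the Radon–Nikodym property (with respect to the idempotent $\odot$-integral) if every $\sigma$-maxitive measure $\nu$ on $\mathcal{B}$ with $\nu\ll_\odot\tau$ has a density with respect to $\tau$. - $\tau$ is $\sigma$-$\odot$-finite if there is a countable family $(B_n)$ in $\mathcal{B}$ covering $E$ with each $\tau(B_n)$ $\odot$-finite. - $\tau$ is $\sigma$-principal if for every $\sigma$-ideal $\mathcal{I}$ of $\mathcal{B}$ there is $L\in\mathcal{I}$ such that $S\setminus L$ is $\tau$-negligible for all $S\in\mathcal{I}$. *)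

From Stdlib Require Import Reals.
Open Scope R_scope.

Inductive ERp : Type :=
| Fin (x : R) (_ : 0 <= x)
| Inf.

Definition zeroE : ERp := Fin 0 (Rle_refl 0).

Definition leE (a b : ERp) : Prop :=
  match a, b with
  | Fin x _, Fin y _ => x <= y
  | _, Inf => True
  | Inf, Fin _ _ => False
  end.

Definition ltE (a b : ERp) : Prop :=
  match a, b with
  | Fin x _, Fin y _ => x < y
  | Fin _ _, Inf => True
  | Inf, _ => False
  end.

Definition is_supE (S : ERp -> Prop) (m : ERp) : Prop :=
  (forall y, S y -> leE y m) /\
  (forall m', (forall y, S y -> leE y m') -> leE m m').

Definition is_infE (S : ERp -> Prop) (m : ERp) : Prop :=
  (forall y, S y -> leE m y) /\
  (forall m', (forall y, S y -> leE m' y) -> leE m' m).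

Definition nbhd (a : ERp) (U : ERp -> Prop) : Prop :=
  match a with
  | Fin x _ => exists eps, 0 < eps /\
      forall y (hy : 0 <= y), Rabs (y - x) < eps -> U (Fin y hy)
  | Inf => exists M : R, U Inf /\ forall y (hy : 0 <= y), M < y -> U (Fin y hy)
  end.

Definition pos_finite (a : ERp) : Prop :=
  match a with Fin x _ => 0 < x | Inf => False end.

Definition pseudo_mult (op : ERp -> ERp -> ERp) (one : ERp) : Prop :=
  (forall a b c, op (op a b) c = op a (op b c)) /\
  (* continuous on (0,oo) x [0,oo] *)
  (forall s t, pos_finite s ->
     forall V, nbhd (op s t) V ->
       exists U W, nbhd s U /\ nbhd t W /\
         forall s' t', U s' -> pos_finite s' -> W t' -> V (op s' t')) /\
  (* for every t, s |-> s (.) t continuous on (0, oo] *)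
  (forall t s, ltE zeroE s ->
     forall V, nbhd (op s t) V ->
       exists U, nbhd s U /\ forall s', U s' -> ltE zeroE s' -> V (op s' t)) /\
  (forall a a' b, leE a a' -> leE (op a b) (op a' b)) /\
  (forall a b b', leE b b' -> leE (op a b) (op a b')) /\
  (forall t, op one t = t) /\
  (forall s t, op s t = zeroE -> s = zeroE \/ t = zeroE) /\
  (forall t, op zeroE t = zeroE /\ op t zeroE = zeroE).

Definition ofinite (op : ERp -> ERp -> ERp) (t : ERp) : Prop :=
  is_infE (fun y => exists s, ltE zeroE s /\ y = op s t) zeroE.

Definition nondegenerate (op : ERp -> ERp -> ERp) (one : ERp) : Prop :=
  ofinite op one.

Section Sets.
Context {E : Type}.

Definition bigU (F : nat -> E -> Prop) : E -> Prop := fun x => exists n, F n x.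

Definition sigma_algebra (B : (E -> Prop) -> Prop) : Prop :=
  B (fun _ => True) /\
  (forall A, B A -> B (fun x => ~ A x)) /\
  (forall F : nat -> E -> Prop, (forall n, B (F n)) -> B (bigU F)).

Definition sigma_ideal (B I : (E -> Prop) -> Prop) : Prop :=
  (exists A, I A) /\
  (forall A, I A -> B A) /\
  (forall F : nat -> E -> Prop, (forall n, I (F n)) -> I (bigU F)) /\
  (forall A C, B A -> I C -> (forall x, A x -> C x) -> I A).

(** sigma-maxitive measure on B (countable families indexed by nat;
    finite families are covered by padding with the empty set). *)
Definition sigma_maxitive (B : (E -> Prop) -> Prop) (nu : (E -> Prop) -> ERp) : Prop :=
  nu (fun _ => False) = zeroE /\
  (forall F : nat -> E -> Prop, (forall n, B (F n)) ->
     is_supE (fun y => exists n, y = nu (F n)) (nu (bigU F))).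

Definition negligible (B : (E -> Prop) -> Prop) (tau : (E -> Prop) -> ERp)
  (N : E -> Prop) : Prop :=
  exists C, B C /\ tau C = zeroE /\ forall x, N x -> C x.

Definition measurable (B : (E -> Prop) -> Prop) (f : E -> ERp) : Prop :=
  forall t, t <> Inf -> B (fun x => ltE t (f x)).

Definition integral_is (op : ERp -> ERp -> ERp) (nu : (E -> Prop) -> ERp)
  (A : E -> Prop) (f : E -> ERp) (v : ERp) : Prop :=
  is_supE (fun y => exists t, t <> Inf /\
             y = op t (nu (fun x => A x /\ ltE t (f x)))) v.

Definition has_density (op : ERp -> ERp -> ERp) (B : (E -> Prop) -> Prop)
  (nu tau : (E -> Prop) -> ERp) : Prop :=
  exists c : E -> ERp, measurable B c /\
    forall A, B A -> integral_is op tau A c (nu A).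

Definition abs_cont (op : ERp -> ERp -> ERp) (B : (E -> Prop) -> Prop)
  (nu tau : (E -> Prop) -> ERp) : Prop :=
  forall A, B A -> ofinite op (tau A) -> leE (nu A) (op Inf (tau A)).

Definition RN_property (op : ERp -> ERp -> ERp) (B : (E -> Prop) -> Prop)
  (tau : (E -> Prop) -> ERp) : Prop :=
  forall nu, sigma_maxitive B nu -> abs_cont op B nu tau -> has_density op B nu tau.

Definition sigma_ofinite (op : ERp -> ERp -> ERp) (B : (E -> Prop) -> Prop)
  (tau : (E -> Prop) -> ERp) : Prop :=
  exists F : nat -> E -> Prop,
    (forall n, B (F n) /\ ofinite op (tau (F n))) /\ (forall x, exists n, F n x).

Definition sigma_principal (B : (E -> Prop) -> Prop) (tau : (E -> Prop) -> ERp) : Prop :=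
  forall I, sigma_ideal B I ->
    exists L, I L /\ forall S, I S -> negligible B tau (fun x => S x /\ ~ L x).

End Sets.

(** Theorem: a σ-maxitive measure [tau] has the Radon–Nikodym property with respect to the
   idempotent (.)-integral iff it is σ-(.)-finite and σ-principal.

   Necessity of σ-principality: for a σ-ideal [I], [rho I A = inf_{S in I} tau (A \ S)] is a
   σ-maxitive measure, absolutely continuous w.r.t. [tau], whose infimum is attained.  If [c]
   is a density of [rho I], a set [L] of [I] attaining [rho I {c = 0} = 0] is essential.
   Necessity of σ-(.)-finiteness: apply the RN property to a measure vanishing exactly on
   countably (.)-finitely covered sets (two constructions, according to whether the lower
   envelopes [O(u)] of (.)-infinite [u] are uniformly positive); the level sets
   [{c = 0}], [{c > 1/(n+1)}] of the density then provide the countable cover.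

   Sufficiency: for each nonnegative rational [q_n], the sets on which [nu <= q_n (.) tau]
   form a σ-ideal; σ-principality yields essential elements, from which the density
   [dens x = inf { q_n | x in sublevel n }] is built.  The lower bound for its integral uses
   σ-principality of an auxiliary ideal and left continuity of (.); the upper bound is proved
   on sets of (.)-finite measure, split into [{dens = 0}], [{dens = +oo}] and strips
   [{j < dens < j+2}], where trisection and continuity of (.) give a squeeze argument. *)

From Stdlib Require Import Reals.
From Stdlib Require Import Lra Lia ZArith Cantor.
From Stdlib Require Import Classical ClassicalEpsilon FunctionalExtensionality PropExtensionality
  ProofIrrelevance.
Open Scope R_scope.

(** * Order structure of [0,+oo] *)

Lemma Fin_eq x y p q : x = y -> Fin x p = Fin y q.
Proof. intros ->. f_equal. apply proof_irrelevance. Qed.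

Lemma leE_refl a : leE a a.
Proof. destruct a; simpl; auto; lra. Qed.
Lemma leE_trans a b c : leE a b -> leE b c -> leE a c.
Proof. destruct a, b, c; simpl; intuition lra. Qed.
Lemma leE_antisym a b : leE a b -> leE b a -> a = b.
Proof. destruct a, b; simpl; intros; try contradiction; auto. apply Fin_eq; lra. Qed.
Lemma leE_0 a : leE zeroE a.
Proof. destruct a; simpl; auto. Qed.
Lemma leE_Inf a : leE a Inf.
Proof. destruct a; simpl; auto. Qed.
Lemma ltE_leE a b : ltE a b -> leE a b.
Proof. destruct a, b; simpl; intuition lra. Qed.
Lemma ltE_nle a b : ltE a b <-> ~ leE b a.
Proof. destruct a, b; simpl; intuition lra. Qed.
Lemma leE_nlt a b : leE a b <-> ~ ltE b a.
Proof. destruct a, b; simpl; intuition lra. Qed.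
Lemma leE_total a b : leE a b \/ leE b a.
Proof. destruct a, b; simpl; auto; lra. Qed.
Lemma ltE_le_trans a b c : ltE a b -> leE b c -> ltE a c.
Proof. destruct a, b, c; simpl; intuition lra. Qed.
Lemma leE_lt_trans a b c : leE a b -> ltE b c -> ltE a c.
Proof. destruct a, b, c; simpl; intuition lra. Qed.
Lemma ltE_irrefl a : ~ ltE a a.
Proof. destruct a; simpl; auto; lra. Qed.
Lemma leE_0_eq a : leE a zeroE -> a = zeroE.
Proof. destruct a; simpl; intros; try contradiction. apply Fin_eq; lra. Qed.
Lemma ltE_0_neq a : ltE zeroE a <-> a <> zeroE.
Proof.
  split.
  - intros H ->. exact (ltE_irrefl _ H).
  - intros H. apply ltE_nle. intros H'. apply H, leE_0_eq, H'.
Qed.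

Lemma sup_exists (S : ERp -> Prop) : exists m, is_supE S m.
Proof.
  destruct (classic (S Inf)) as [HI|HI].
  { exists Inf. split. intros; apply leE_Inf. intros m' H. apply H, HI. }
  set (P := fun x => exists p, S (Fin x p)).
  destruct (classic (exists x, P x)) as [[x0 Hx0]|HP].
  2:{ exists zeroE. split.
      - intros [x p|] Hy. exfalso; apply HP; exists x, p; exact Hy. contradiction.
      - intros; apply leE_0. }
  destruct (classic (bound P)) as [Hb|Hb].
  - destruct (completeness P Hb (ex_intro _ x0 Hx0)) as [l [Hl1 Hl2]].
    assert (Hl0 : 0 <= l).
    { destruct Hx0 as [p Hp]. assert (x0 <= l) by (apply Hl1; exists p; exact Hp). lra. }
    exists (Fin l Hl0). split.
    + intros [x p|] Hy; [|contradiction]. simpl. apply Hl1. exists p; exact Hy.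
    + intros [z q|] Hm; simpl; auto. apply Hl2. intros x [p Hp]. exact (Hm _ Hp).
  - exists Inf. split. intros; apply leE_Inf.
    intros [z q|] Hm; simpl; auto. exfalso. apply Hb. exists z. intros x [p Hp]. exact (Hm _ Hp).
Qed.

Lemma inf_exists (S : ERp -> Prop) : exists m, is_infE S m.
Proof.
  destruct (sup_exists (fun z => forall y, S y -> leE z y)) as [m [H1 H2]].
  exists m. split.
  - intros y Hy. apply H2. intros z Hz. apply Hz, Hy.
  - intros m' Hm'. apply H1. exact Hm'.
Qed.

Lemma sup_lt S m a : is_supE S m -> ltE a m -> exists y, S y /\ ltE a y.
Proof.
  intros [H1 H2] Ha. apply NNPP. intros Hn. apply (ltE_irrefl a).
  eapply ltE_le_trans; [exact Ha|]. apply H2. intros y Hy.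
  apply leE_nlt. intros Hy'. apply Hn. exists y. auto.
Qed.

Lemma inf_gt S m a : is_infE S m -> ltE m a -> exists y, S y /\ ltE y a.
Proof.
  intros [H1 H2] Ha. apply NNPP. intros Hn. apply (ltE_irrefl a).
  eapply leE_lt_trans; [|exact Ha]. apply H2. intros y Hy.
  apply leE_nlt. intros Hy'. apply Hn. exists y. auto.
Qed.

Definition supE (S : ERp -> Prop) : ERp :=
  proj1_sig (constructive_indefinite_description _ (sup_exists S)).
Lemma supE_spec S : is_supE S (supE S).
Proof. unfold supE. destruct (constructive_indefinite_description _ _). auto. Qed.
Definition infE (S : ERp -> Prop) : ERp :=
  proj1_sig (constructive_indefinite_description _ (inf_exists S)).
Lemma infE_spec S : is_infE S (infE S).
Proof. unfold infE. destruct (constructive_indefinite_description _ _). auto. Qed.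

(* The element [max x 0] of [0,+oo]; used to name real numbers known to be nonnegative. *)
Definition mkE (x : R) : ERp :=
  match Rle_dec 0 x with left p => Fin x p | right _ => zeroE end.
Lemma mkE_Fin x p : mkE x = Fin x p.
Proof. unfold mkE. destruct (Rle_dec 0 x). apply Fin_eq; auto. contradiction. Qed.
Ltac rew_mkE := repeat match goal with |- context [mkE ?x] =>
  let H := fresh "Hmk" in assert (H : 0 <= x) by lra; rewrite (mkE_Fin x H) end.
Ltac rew_mkE_in h := repeat match type of h with context [mkE ?x] =>
  let H := fresh "Hmk" in assert (H : 0 <= x) by lra; rewrite (mkE_Fin x H) in h end.

Lemma mkE_pos x : 0 < x -> ltE zeroE (mkE x).
Proof. intros H. rewrite (mkE_Fin x (Rlt_le _ _ H)). unfold zeroE; cbn [ltE leE]; lra. Qed.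
Lemma mkE_notInf x : mkE x <> Inf.
Proof. unfold mkE. destruct (Rle_dec 0 x); discriminate. Qed.

Lemma exists_inv_lt eps : 0 < eps -> exists k, / INR (Datatypes.S k) < eps.
Proof.
  intros He. destruct (archimed (/ eps)) as [H1 _].
  assert (Hpos : 0 < / eps) by (apply Rinv_0_lt_compat; auto).
  exists (Z.to_nat (up (/ eps))).
  rewrite S_INR, INR_IZR_INZ, Z2Nat.id.
  2:{ apply le_IZR. lra. }
  rewrite <- (Rinv_inv eps) at 2. apply Rinv_lt_contravar. nra. lra.
Qed.

Lemma inv_S_pos k : 0 < / INR (Datatypes.S k).
Proof. apply Rinv_0_lt_compat. apply lt_0_INR. lia. Qed.

Lemma pos_exists_inv a : ltE zeroE a -> exists k, ltE (mkE (/ INR (Datatypes.S k))) a.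
Proof.
  destruct a as [y q|]; intros H.
  - unfold zeroE in H; cbn [ltE leE] in H. destruct (exists_inv_lt y H) as [k Hk]. exists k.
    rewrite (mkE_Fin _ (Rlt_le _ _ (inv_S_pos k))). cbn [ltE leE]. auto.
  - exists O. rewrite (mkE_Fin _ (Rlt_le _ _ (inv_S_pos O))). cbn [ltE leE]. auto.
Qed.

Lemma le_approx v x p : (forall eps, 0 < eps -> leE v (mkE (x + eps))) -> leE v (Fin x p).
Proof.
  intros H. destruct v as [y q|].
  - cbn [ltE leE]. destruct (Rle_dec y x) as [|Hyx]; auto.
    specialize (H ((y - x)/2) ltac:(lra)). rew_mkE_in H. cbn [ltE leE] in H. lra.
  - specialize (H 1 ltac:(lra)). rew_mkE_in H. cbn [ltE leE] in H. contradiction.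
Qed.

Lemma nbhd_self a U : nbhd a U -> U a.
Proof.
  destruct a as [x p|]; simpl.
  - intros [eps [He H]]. apply H. rewrite Rminus_diag, Rabs_R0. exact He.
  - intros [M [H _]]. exact H.
Qed.

Lemma nbhd_lt a b : ltE a b -> nbhd a (fun y => ltE y b).
Proof.
  destruct a as [x p|]; simpl; [|contradiction].
  destruct b as [z q|]; simpl; intros H.
  - exists (z - x). split; [lra|]. intros y hy Hy. simpl.
    apply Rabs_def2 in Hy. lra.
  - exists 1. split; [lra|]. intros; simpl; auto.
Qed.

Lemma nbhd_gt a b : ltE b a -> nbhd a (fun y => ltE b y).
Proof.
  destruct a as [x p|]; simpl.
  - destruct b as [z q|]; simpl; [|contradiction]. intros H.
    exists (x - z). split; [lra|]. intros y hy Hy. simpl.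
    apply Rabs_def2 in Hy. lra.
  - destruct b as [z q|]; simpl; [|contradiction]. intros _.
    exists z. split; [simpl; auto|]. intros y hy Hy; simpl; lra.
Qed.

Lemma sup_nbhd X u W : is_supE X u -> (exists y, X y) -> nbhd u W -> exists y, X y /\ W y.
Proof.
  intros [H1 H2] [y0 Hy0] HW. apply NNPP. intros Hn.
  destruct u as [x p|]; simpl in HW.
  - destruct HW as [eps [He HW]].
    assert (Hall : forall y, X y -> exists z q, y = Fin z q /\ z <= x - eps).
    { intros [z q|] Hy.
      - exists z, q. split; auto. specialize (H1 _ Hy). simpl in H1.
        destruct (Rle_dec z (x - eps)); auto. exfalso. apply Hn. exists (Fin z q). split; auto.
        apply HW. rewrite Rabs_left1; lra.
      - specialize (H1 _ Hy). simpl in H1. contradiction. }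
    destruct (Rle_dec 0 (x - eps)) as [Hxe|Hxe].
    + assert (Hle : leE (Fin x p) (Fin (x - eps) Hxe)).
      { apply H2. intros y Hy. destruct (Hall y Hy) as (z & q & -> & Hz). simpl; auto. }
      simpl in Hle. lra.
    + destruct (Hall y0 Hy0) as (z & q & -> & Hz). lra.
  - destruct HW as [M [HI HW]].
    assert (HM : 0 <= Rmax M 0) by apply Rmax_r.
    assert (Hle : leE Inf (Fin (Rmax M 0) HM)).
    { apply H2. intros [z q|] Hy.
      - simpl. destruct (Rle_dec z M). pose proof (Rmax_l M 0); lra.
        exfalso. apply Hn. exists (Fin z q). split; auto. apply HW. lra.
      - exfalso. apply Hn. exists Inf. auto. }
    simpl in Hle. auto.
Qed.

Lemma inf_eventually (u : nat -> ERp) us W :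
  (forall n, leE (u (S n)) (u n)) -> is_infE (fun y => exists n, y = u n) us -> nbhd us W ->
  exists K, forall k, (K <= k)%nat -> W (u k).
Proof.
  intros Hdec [H1 H2] HW.
  assert (Hmono : forall k k', (k <= k')%nat -> leE (u k') (u k)).
  { intros k k' Hk. induction Hk. apply leE_refl. eapply leE_trans; eauto. }
  destruct us as [x p|]; simpl in HW.
  - destruct HW as [eps [He HW]].
    assert (Hlt : ltE (Fin x p) (Fin (x + eps) ltac:(lra))) by (simpl; lra).
    destruct (inf_gt _ _ _ (conj H1 H2) Hlt) as [y [[K ->] HK]].
    exists K. intros k Hk. specialize (H1 (u k) (ex_intro _ k eq_refl)).
    pose proof (leE_lt_trans _ _ _ (Hmono _ _ Hk) HK) as Hk'.
    destruct (u k) as [z q|] eqn:Huk; simpl in *; [|contradiction].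
    apply HW. apply Rabs_def1; lra.
  - exists O. intros k _. specialize (H1 (u k) (ex_intro _ k eq_refl)).
    destruct (u k); simpl in H1; [contradiction|]. destruct HW; tauto.
Qed.

Lemma set_ext {E : Type} (A C : E -> Prop) : (forall x, A x <-> C x) -> A = C.
Proof.
  intros H. apply functional_extensionality. intros x. apply propositional_extensionality. apply H.
Qed.

Section SetLemmas.
Context {E : Type} (B : (E -> Prop) -> Prop) (HB : sigma_algebra B).

Lemma B_full : B (fun _ => True).
Proof. apply HB. Qed.
Lemma B_compl A : B A -> B (fun x => ~ A x).
Proof. apply HB. Qed.
Lemma B_bigU F : (forall n, B (F n)) -> B (bigU F).
Proof. apply HB. Qed.
Lemma B_empty : B (fun _ => False).
Proof.
  replace (fun _ : E => False) with (fun x : E => ~ (fun _ => True) x).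
  apply B_compl, B_full. apply set_ext. intros x; tauto.
Qed.

Definition two (A C : E -> Prop) : nat -> E -> Prop :=
  fun n => match n with O => A | _ => C end.
Lemma bigU_two A C : bigU (two A C) = (fun x => A x \/ C x).
Proof.
  apply set_ext. intros x. unfold bigU, two. split.
  - intros [[|n] H]; auto.
  - intros [H|H]. exists O; auto. exists 1%nat; auto.
Qed.
Lemma B_two A C n : B A -> B C -> B (two A C n).
Proof. destruct n; simpl; auto. Qed.

Lemma B_union A C : B A -> B C -> B (fun x => A x \/ C x).
Proof. intros. rewrite <- bigU_two. apply B_bigU. intros; apply B_two; auto. Qed.
Lemma B_inter A C : B A -> B C -> B (fun x => A x /\ C x).
Proof.
  intros HA HC.
  replace (fun x => A x /\ C x) with
    (fun x => ~ (fun y => (fun z => ~ A z) y \/ (fun z => ~ C z) y) x).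
  apply B_compl, B_union; apply B_compl; auto.
  apply set_ext; intros x; simpl. tauto.
Qed.
Lemma B_diff A C : B A -> B C -> B (fun x => A x /\ ~ C x).
Proof. intros. apply B_inter; auto. apply B_compl; auto. Qed.
Lemma B_ext A C : (forall x, A x <-> C x) -> B A -> B C.
Proof. intros H. rewrite (set_ext A C H). auto. Qed.
Lemma B_const (P : Prop) : B (fun _ => P).
Proof.
  destruct (classic P) as [H|H].
  - apply B_ext with (fun _ => True). intros; tauto. apply B_full.
  - apply B_ext with (fun _ => False). intros; tauto. apply B_empty.
Qed.

Section Maxitive.
Context (nu : (E -> Prop) -> ERp) (Hnu : sigma_maxitive B nu).

Lemma mx_empty : nu (fun _ => False) = zeroE.
Proof. apply Hnu. Qed.
Lemma mx_ext A C : (forall x, A x <-> C x) -> nu A = nu C.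
Proof. intros H. rewrite (set_ext A C H). auto. Qed.
Lemma mx_sup F : (forall n, B (F n)) ->
  is_supE (fun y => exists n, y = nu (F n)) (nu (bigU F)).
Proof. apply Hnu. Qed.
Lemma mx_ub F n : (forall n, B (F n)) -> leE (nu (F n)) (nu (bigU F)).
Proof. intros H. apply (mx_sup F H). eauto. Qed.
Lemma mx_least F m : (forall n, B (F n)) -> (forall n, leE (nu (F n)) m) -> leE (nu (bigU F)) m.
Proof. intros H Hm. apply (mx_sup F H). intros y [n ->]. auto. Qed.
Lemma mx_union_least A C m : B A -> B C -> leE (nu A) m -> leE (nu C) m ->
  leE (nu (fun x => A x \/ C x)) m.
Proof.
  intros HA HC H1 H2. rewrite <- bigU_two. apply mx_least.
  intros; apply B_two; auto. intros [|n]; simpl; auto.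
Qed.
Lemma mx_mono A C : B A -> B C -> (forall x, A x -> C x) -> leE (nu A) (nu C).
Proof.
  intros HA HC H.
  replace C with (bigU (two A C)).
  apply (mx_ub (two A C) O). intros; apply B_two; auto.
  rewrite bigU_two. apply set_ext. intros x. split; auto. intros [?|?]; auto.
Qed.
Lemma mx_null_union A C : B A -> B C -> nu A = zeroE -> nu C = zeroE ->
  nu (fun x => A x \/ C x) = zeroE.
Proof.
  intros HA HC H1 H2. apply leE_0_eq. apply mx_union_least; auto.
  rewrite H1; apply leE_refl. rewrite H2; apply leE_refl.
Qed.
Lemma mx_null_bigU F : (forall n, B (F n)) -> (forall n, nu (F n) = zeroE) -> nu (bigU F) = zeroE.
Proof. intros H1 H2. apply leE_0_eq, mx_least; auto. intros n; rewrite H2; apply leE_refl. Qed.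
Lemma mx_null_sub A C : B A -> B C -> (forall x, A x -> C x) -> nu C = zeroE -> nu A = zeroE.
Proof. intros. apply leE_0_eq. rewrite <- H2. apply mx_mono; auto. Qed.

End Maxitive.
End SetLemmas.

(** * Consequences of the pseudo-multiplication axioms *)

Section OpLemmas.
Context (op : ERp -> ERp -> ERp) (one : ERp) (Hpm : pseudo_mult op one).

Lemma op_monol a a' b : leE a a' -> leE (op a b) (op a' b).
Proof. destruct Hpm as (_ & _ & _ & H & _). apply H. Qed.
Lemma op_monor a b b' : leE b b' -> leE (op a b) (op a b').
Proof. destruct Hpm as (_ & _ & _ & _ & H & _). apply H. Qed.
Lemma op_mono a a' b b' : leE a a' -> leE b b' -> leE (op a b) (op a' b').
Proof. intros. eapply leE_trans. apply op_monol; eauto. apply op_monor; auto. Qed.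
Lemma op_one t : op one t = t.
Proof. destruct Hpm as (_ & _ & _ & _ & _ & H & _). apply H. Qed.
Lemma op_nzd s t : op s t = zeroE -> s = zeroE \/ t = zeroE.
Proof. destruct Hpm as (_ & _ & _ & _ & _ & _ & H & _). apply H. Qed.
Lemma op_0l t : op zeroE t = zeroE.
Proof. destruct Hpm as (_ & _ & _ & _ & _ & _ & _ & H). apply H. Qed.
Lemma op_0r t : op t zeroE = zeroE.
Proof. destruct Hpm as (_ & _ & _ & _ & _ & _ & _ & H). apply H. Qed.
Lemma op_cont2 s t : pos_finite s -> forall V, nbhd (op s t) V ->
  exists U W, nbhd s U /\ nbhd t W /\
    forall s' t', U s' -> pos_finite s' -> W t' -> V (op s' t').
Proof. destruct Hpm as (_ & H & _). apply H. Qed.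
Lemma op_cont1 t s : ltE zeroE s -> forall V, nbhd (op s t) V ->
  exists U, nbhd s U /\ forall s', U s' -> ltE zeroE s' -> V (op s' t).
Proof. destruct Hpm as (_ & _ & H & _). apply H. Qed.

Lemma op_pos_null s t : ltE zeroE s -> op s t = zeroE -> t = zeroE.
Proof.
  intros Hs H. destruct (op_nzd s t H) as [->|]; auto. exfalso; exact (ltE_irrefl _ Hs).
Qed.

Lemma op_sup_r_least r X u m : pos_finite r -> is_supE X u -> (exists y, X y) ->
  (forall y, X y -> leE (op r y) m) -> leE (op r u) m.
Proof.
  intros Hr Hu Hne Hm. apply leE_nlt. intros Hlt.
  destruct (op_cont2 r u Hr _ (nbhd_gt _ _ Hlt)) as (U & W & HU & HW & H).
  destruct (sup_nbhd X u W Hu Hne HW) as [y [Hy Wy]].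
  specialize (H r y (nbhd_self _ _ HU) Hr Wy).
  apply (ltE_irrefl m). eapply ltE_le_trans; eauto.
Qed.

Lemma op_left_open s u a : ltE zeroE s -> ltE a (op s u) ->
  exists U, nbhd s U /\ forall s', U s' -> ltE zeroE s' -> ltE a (op s' u).
Proof. intros Hs Ha. apply (op_cont1 u s Hs _ (nbhd_gt _ _ Ha)). Qed.

Lemma op_Inf_le u m : (forall s, s <> Inf -> leE (op s u) m) -> leE (op Inf u) m.
Proof.
  intros Hm. apply leE_nlt. intros Hlt.
  destruct (op_left_open Inf u m ltac:(unfold zeroE; cbn [ltE]; auto) Hlt) as [U [HU HUs]].
  cbn [nbhd] in HU. destruct HU as [M0 [_ HM]].
  pose proof (Rmax_l M0 0). pose proof (Rmax_r M0 0).
  assert (Hs0 : 0 <= Rmax M0 0 + 1) by lra.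
  specialize (HUs (Fin (Rmax M0 0 + 1) Hs0) (HM _ Hs0 ltac:(lra))
                  ltac:(unfold zeroE; cbn [ltE]; lra)).
  apply (ltE_irrefl m). eapply ltE_le_trans; [exact HUs|]. apply Hm. discriminate.
Qed.

Lemma ofinite_0 : ofinite op zeroE.
Proof.
  split.
  - intros; apply leE_0.
  - intros m' Hm. assert (H1 : 0 <= 1) by lra.
    assert (H2 : ltE zeroE (Fin 1 H1)) by (unfold zeroE; simpl; lra).
    assert (Hx : exists s, ltE zeroE s /\ op (Fin 1 H1) zeroE = op s zeroE) by eauto.
    specialize (Hm _ Hx). rewrite op_0r in Hm. exact Hm.
Qed.

Lemma ofinite_down u v : leE u v -> ofinite op v -> ofinite op u.
Proof.
  intros Huv [_ H]. split.
  - intros; apply leE_0.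
  - intros m' Hm. apply H. intros y [s [Hs ->]]. eapply leE_trans.
    apply Hm. exists s; eauto. apply op_monor; auto.
Qed.

Lemma ofinite_small u a : ofinite op u -> ltE zeroE a ->
  exists s, ltE zeroE s /\ ltE (op s u) a.
Proof.
  intros Hu Ha. destruct (inf_gt _ _ _ Hu Ha) as [y [[s [Hs ->]] Hy]]. eauto.
Qed.

Lemma ofinite_lb u m : ofinite op u -> (forall s, ltE zeroE s -> leE m (op s u)) -> m = zeroE.
Proof.
  intros [_ H] Hm. apply leE_0_eq. apply H. intros y [s [Hs ->]]. auto.
Qed.

Lemma not_ofinite_lb u m : ~ ofinite op u ->
  is_infE (fun y => exists s, ltE zeroE s /\ y = op s u) m -> ltE zeroE m.
Proof. intros Hn Hm. apply ltE_0_neq. intros ->. apply Hn. exact Hm. Qed.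

(* Squeeze principle behind the upper bound of the density: if the reals [a k <= st <= b k]
   close down on [st], [u] is nonincreasing and bounded by a (.)-finite value, then
   [b k (.) u k >= w] and [a k (.) u k <= m] for all [k] force [w <= m]. *)
Lemma op_squeeze_zero (a b : nat -> R) (u : nat -> ERp) v w :
  (forall k, 0 <= a k <= 0 /\ 0 <= b k) ->
  (forall eps, 0 < eps -> exists K, forall k, (K <= k)%nat -> b k - a k < eps) ->
  (forall k, leE (u k) v) -> ofinite op v -> ltE zeroE w ->
  (forall k, leE w (op (mkE (b k)) (u k))) -> False.
Proof.
  intros Hab Hconv Hv Hof Hw HF.
  destruct (ofinite_small v w Hof Hw) as [s [Hs Hsw]].
  assert (Hk : exists k, leE (mkE (b k)) s).
  { destruct s as [s0 q|].
    - unfold zeroE in Hs. cbn [ltE] in Hs. destruct (Hconv s0 Hs) as [K HK]. exists K.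
      specialize (HK K (le_n K)). destruct (Hab K). rew_mkE. cbn [leE]. lra.
    - exists O. apply leE_Inf. }
  destruct Hk as [k Hk].
  apply (ltE_irrefl w). eapply leE_lt_trans; [|exact Hsw].
  apply leE_trans with (op (mkE (b k)) (u k)); [apply HF|]. apply op_mono; auto.
Qed.

Lemma op_squeeze_pos (a b : nat -> R) (st : R) (u : nat -> ERp) w m :
  0 < st -> (forall k, 0 <= a k <= st /\ st <= b k) ->
  (forall eps, 0 < eps -> exists K, forall k, (K <= k)%nat -> b k - a k < eps) ->
  (forall k, leE (u (S k)) (u k)) ->
  (forall k, leE w (op (mkE (b k)) (u k))) ->
  (forall k, leE (op (mkE (a k)) (u k)) m) -> ltE m w -> False.
Proof.
  intros Hstp Hab Hconv Hudec HF1 HF2 Hw.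
  destruct (inf_exists (fun y => exists n, y = u n)) as [us Hus].
  assert (Hsig : pos_finite (mkE st)) by (rew_mkE; cbn [pos_finite]; lra).
  destruct (classic (ltE (op (mkE st) us) w)) as [Hlt|Hge].
  - destruct (op_cont2 (mkE st) us Hsig _ (nbhd_lt _ _ Hlt)) as (U & W & HU & HW & Hc).
    rewrite (mkE_Fin st (Rlt_le _ _ Hstp)) in HU. cbn [nbhd] in HU.
    destruct HU as [eps [He Heps]].
    destruct (inf_eventually u us W Hudec Hus HW) as [K1 HK1].
    destruct (Hconv eps He) as [K2 HK2].
    set (K := Nat.max K1 K2).
    specialize (HK1 K ltac:(lia)). specialize (HK2 K ltac:(lia)). destruct (Hab K).
    assert (HU' : U (mkE (b K))) by (rew_mkE; apply Heps; rewrite Rabs_right; lra).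
    specialize (Hc (mkE (b K)) (u K) HU' ltac:(rew_mkE; cbn [pos_finite]; lra) HK1).
    apply (ltE_irrefl w). eapply leE_lt_trans; [apply HF1|exact Hc].
  - assert (Hgt : ltE m (op (mkE st) us)) by (eapply ltE_le_trans; [exact Hw|]; apply leE_nlt; auto).
    destruct (op_cont2 (mkE st) us Hsig _ (nbhd_gt _ _ Hgt)) as (U & W & HU & HW & Hc).
    rewrite (mkE_Fin st (Rlt_le _ _ Hstp)) in HU. cbn [nbhd] in HU.
    destruct HU as [eps [He Heps]].
    destruct (inf_eventually u us W Hudec Hus HW) as [K1 HK1].
    destruct (Hconv (Rmin eps st) ltac:(apply Rmin_pos; lra)) as [K2 HK2].
    set (K := Nat.max K1 K2).
    specialize (HK1 K ltac:(lia)). specialize (HK2 K ltac:(lia)). destruct (Hab K).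
    pose proof (Rmin_l eps st). pose proof (Rmin_r eps st).
    assert (HU' : U (mkE (a K))) by (rew_mkE; apply Heps; rewrite Rabs_left1; lra).
    specialize (Hc (mkE (a K)) (u K) HU' ltac:(rew_mkE; cbn [pos_finite]; lra) HK1).
    apply (ltE_irrefl m). eapply ltE_le_trans; [exact Hc|apply HF2].
Qed.

Lemma op_squeeze (a b : nat -> R) (st : R) (u : nat -> ERp) v w m :
  (forall k, 0 <= a k <= st /\ st <= b k) ->
  (forall eps, 0 < eps -> exists K, forall k, (K <= k)%nat -> b k - a k < eps) ->
  (forall k, leE (u (S k)) (u k)) -> (forall k, leE (u k) v) -> ofinite op v ->
  (forall k, leE w (op (mkE (b k)) (u k))) ->
  (forall k, leE (op (mkE (a k)) (u k)) m) -> ltE m w -> False.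
Proof.
  intros Hab Hconv Hudec Hv Hof HF1 HF2 Hw.
  assert (Hst : 0 <= st) by (destruct (Hab O); lra).
  destruct (Req_dec st 0) as [->|Hst0].
  - assert (Hab0 : forall k, 0 <= a k <= 0 /\ 0 <= b k) by (intros k; destruct (Hab k); lra).
    exact (op_squeeze_zero a b u v w Hab0 Hconv Hv Hof (leE_lt_trans _ _ _ (leE_0 m) Hw) HF1).
  - exact (op_squeeze_pos a b st u w m ltac:(lra) Hab Hconv Hudec HF1 HF2 Hw).
Qed.

End OpLemmas.

Section Density.
Context {E : Type} (B : (E -> Prop) -> Prop) (HB : sigma_algebra B).
Context (op : ERp -> ERp -> ERp) (one : ERp) (Hpm : pseudo_mult op one).
Context (tau : (E -> Prop) -> ERp) (Htau : sigma_maxitive B tau).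

Definition zero_set (c : E -> ERp) : E -> Prop := fun x => ~ ltE zeroE (c x).
Definition level (c : E -> ERp) (n : nat) : E -> Prop :=
  fun x => ltE (mkE (/ INR (S n))) (c x).
Definition levels (c : E -> ERp) (n : nat) : E -> Prop :=
  match n with O => zero_set c | S k => level c k end.

Lemma levels_cover c x : exists n, levels c n x.
Proof.
  destruct (classic (ltE zeroE (c x))) as [Hx|Hx].
  - destruct (pos_exists_inv _ Hx) as [k Hk]. exists (S k). exact Hk.
  - exists O. exact Hx.
Qed.

Lemma level_pos c n x : level c n x -> ltE zeroE (c x).
Proof. intros H. eapply leE_lt_trans; [apply leE_0|exact H]. Qed.

Lemma zero_set_B c : measurable B c -> B (zero_set c).
Proof. intros Hc. unfold zero_set. apply B_compl; auto. apply Hc. discriminate. Qed.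
Lemma level_B c n : measurable B c -> B (level c n).
Proof. intros Hc. apply Hc, mkE_notInf. Qed.
Lemma levels_B c n : measurable B c -> B (levels c n).
Proof. destruct n; simpl; [apply zero_set_B | apply level_B]. Qed.

Section WithDensity.
Context (nu : (E -> Prop) -> ERp) (c : E -> ERp) (Hc : measurable B c)
  (Hint : forall A, B A -> integral_is op tau A c (nu A)).

Lemma density_lower A t : B A -> t <> Inf ->
  leE (op t (tau (fun x => A x /\ ltE t (c x)))) (nu A).
Proof. intros HA Ht. apply (Hint A HA). eauto. Qed.

Lemma density_level n : leE (op (mkE (/ INR (S n))) (tau (level c n))) (nu (level c n)).
Proof.
  pose proof (density_lower (level c n) _ (level_B c n Hc) (mkE_notInf (/ INR (S n)))) as H.
  rewrite (mx_ext tau _ (level c n)) in H by (intros x; unfold level; tauto). exact H.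
Qed.

Lemma density_zero_set : nu (zero_set c) = zeroE.
Proof.
  apply leE_0_eq. apply (Hint _ (zero_set_B c Hc)). intros y [t [Ht ->]].
  rewrite (mx_ext tau _ (fun _ => False)).
  - rewrite (mx_empty B tau Htau), (op_0r op one Hpm). apply leE_refl.
  - intros x; split; [|tauto]. intros [H1 H2]. apply H1.
    eapply leE_lt_trans; [apply leE_0|exact H2].
Qed.

Lemma density_null N : B N -> nu N = zeroE -> tau (fun x => N x /\ ltE zeroE (c x)) = zeroE.
Proof.
  intros HN HN0.
  rewrite (mx_ext tau _ (bigU (fun n x => N x /\ level c n x))).
  - apply (mx_null_bigU B tau Htau). intros n; apply B_inter; auto; apply level_B; auto.
    intros n. apply (op_pos_null op one Hpm (mkE (/ INR (S n)))). apply mkE_pos, inv_S_pos.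
    apply leE_0_eq. rewrite <- HN0. apply (density_lower N); auto. apply mkE_notInf.
  - intros x. split.
    + intros [H1 H2]. destruct (pos_exists_inv _ H2) as [k Hk]. exists k; split; auto.
    + intros [k [H1 H2]]. split; auto. exact (level_pos c k x H2).
Qed.

End WithDensity.
End Density.

(** * Necessity of σ-principality *)

Section SigmaPrincipal.
Context {E : Type} (B : (E -> Prop) -> Prop) (HB : sigma_algebra B).
Context (op : ERp -> ERp -> ERp) (one : ERp) (Hpm : pseudo_mult op one).
Context (tau : (E -> Prop) -> ERp) (Htau : sigma_maxitive B tau).

Lemma ideal_empty I : sigma_ideal B I -> I (fun _ => False).
Proof.
  intros (HI1 & HI2 & HI3 & HI4). destruct HI1 as [A0 HA0].
  apply (HI4 _ A0); auto. apply B_empty; auto. intros x [].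
Qed.

Lemma ideal_B I A : sigma_ideal B I -> I A -> B A.
Proof. intros (_ & H & _). auto. Qed.

(* The [tau]-mass of [A] that cannot be removed by sets of the ideal [I]. *)
Definition rho (I : (E -> Prop) -> Prop) (A : E -> Prop) : ERp :=
  infE (fun y => exists S, I S /\ y = tau (fun x => A x /\ ~ S x)).

Lemma rho_le I A S : I S -> leE (rho I A) (tau (fun x => A x /\ ~ S x)).
Proof. intros HS. apply (infE_spec _). eauto. Qed.

(* The infimum defining [rho] is attained, by a countable union of almost-optimal sets. *)
Lemma rho_attained I A : sigma_ideal B I -> B A ->
  exists S, I S /\ tau (fun x => A x /\ ~ S x) = rho I A.
Proof.
  intros HI HA.
  pose proof (infE_spec (fun y => exists S, I S /\ y = tau (fun x => A x /\ ~ S x))) as Hm.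
  fold (rho I A) in Hm.
  destruct (rho I A) as [x p|] eqn:Hr.
  - assert (Hex : forall k, exists Z, I Z /\
        ltE (tau (fun x => A x /\ ~ Z x)) (mkE (x + / INR (S k)))).
    { intros k. assert (Hl : ltE (Fin x p) (mkE (x + / INR (S k)))).
      { pose proof (inv_S_pos k). rew_mkE. cbn [ltE leE]. lra. }
      destruct (inf_gt _ _ _ Hm Hl) as [y [[Z [HZ ->]] Hy]]. eauto. }
    destruct (choice _ Hex) as [Sk HSk].
    exists (bigU Sk). assert (HIS : I (bigU Sk)) by (apply HI; intros; apply HSk).
    split; auto. apply leE_antisym.
    + apply le_approx. intros eps He. destruct (exists_inv_lt eps He) as [k Hk].
      apply leE_trans with (tau (fun x => A x /\ ~ Sk k x)).
      * apply (mx_mono B tau Htau).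
        -- apply B_diff; auto. apply (ideal_B I); auto.
        -- apply B_diff; auto. apply (ideal_B I); auto. apply HSk.
        -- intros z [Hz1 Hz2]. split; auto. intros Hz3. apply Hz2. exists k. auto.
      * eapply leE_trans. apply ltE_leE, HSk.
        pose proof (inv_S_pos k). rew_mkE. cbn [ltE leE]. lra.
    + apply Hm. eauto.
  - exists (fun _ => False). split. apply ideal_empty; auto.
    apply leE_antisym. apply leE_Inf. apply Hm. exists (fun _ => False).
    split; auto. apply ideal_empty; auto.
Qed.

Lemma rho_mono I A C : sigma_ideal B I -> B A -> B C -> (forall x, A x -> C x) ->
  leE (rho I A) (rho I C).
Proof.
  intros HI HA HC Hsub. destruct (rho_attained I C HI HC) as [S [HS Heq]].
  rewrite <- Heq. eapply leE_trans. apply (rho_le I A S HS).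
  apply (mx_mono B tau Htau); try (apply B_diff; auto; apply (ideal_B I); auto).
  intros x [H1 H2]; auto.
Qed.

Lemma rho_maxitive I : sigma_ideal B I -> sigma_maxitive B (rho I).
Proof.
  intros HI. split.
  - apply leE_0_eq. eapply leE_trans. apply (rho_le I _ _ (ideal_empty I HI)).
    rewrite (mx_ext tau _ (fun _ => False)); [|intros; cbv beta; tauto].
    rewrite (mx_empty B tau Htau). apply leE_refl.
  - intros F HF.
    destruct (choice _ (fun n => rho_attained I (F n) HI (HF n))) as [Sn HSn].
    assert (HIS : I (bigU Sn)) by (apply HI; intros; apply HSn).
    assert (HBS : B (bigU Sn)) by (apply (ideal_B I); auto).
    split.
    + intros y [n ->]. apply rho_mono; auto. apply B_bigU; auto. intros x Hx. exists n; auto.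
    + intros m' Hm'. eapply leE_trans. apply (rho_le I _ _ HIS).
      rewrite (mx_ext tau _ (bigU (fun n x => F n x /\ ~ bigU Sn x))).
      2:{ intros x. unfold bigU. split.
          - intros [[n H1] H2]. exists n; auto.
          - intros [n [H1 H2]]. split; eauto. }
      apply (mx_least B tau Htau). intros n; apply B_diff; auto.
      intros n. eapply leE_trans. 2: apply Hm'; eauto.
      rewrite <- (proj2 (HSn n)). apply (mx_mono B tau Htau).
      apply B_diff; auto. apply B_diff; auto. apply (ideal_B I); auto. apply HSn.
      intros x [H1 H2]. split; auto. intros H3. apply H2. exists n; auto.
Qed.

Lemma rho_abs_cont I : sigma_ideal B I -> abs_cont op B (rho I) tau.
Proof.
  intros HI A HA _. eapply leE_trans. apply (rho_le I A _ (ideal_empty I HI)).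
  rewrite (mx_ext tau _ A) by tauto.
  rewrite <- (op_one op one Hpm (tau A)) at 1. apply (op_monol op one Hpm); auto. apply leE_Inf.
Qed.

(* If [rho I] has a density [c], a set of [I] exhausting the zero set of [c] is essential:
   every [S] of [I] is [rho I]-null, hence [tau]-null where [c > 0]. *)
Lemma RN_sigma_principal : RN_property op B tau -> sigma_principal B tau.
Proof.
  intros HRN I HI.
  destruct (HRN (rho I) (rho_maxitive I HI) (rho_abs_cont I HI)) as [c [Hc Hint]].
  assert (HBZ : B (zero_set c)) by (apply zero_set_B; auto).
  destruct (rho_attained I (zero_set c) HI HBZ) as [L [HL HL0]].
  rewrite (density_zero_set B HB op one Hpm tau Htau (rho I) c Hc Hint) in HL0.
  exists L. split; auto. intros S HS.
  assert (HBS : B S) by (apply (ideal_B I); auto).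
  assert (HrS : rho I S = zeroE).
  { apply leE_0_eq. eapply leE_trans. apply (rho_le I S S HS).
    rewrite (mx_ext tau _ (fun _ => False)) by tauto. rewrite (mx_empty B tau Htau).
    apply leE_refl. }
  pose proof (density_null B HB op one Hpm tau Htau (rho I) c Hc Hint S HBS HrS) as Hpos.
  exists (fun x => (S x /\ ltE zeroE (c x)) \/ (zero_set c x /\ ~ L x)). split; [|split].
  - apply B_union; auto. apply B_inter; auto; apply Hc; discriminate.
    apply B_diff; auto. apply (ideal_B I); auto.
  - apply (mx_null_union B tau Htau); auto. apply B_inter; auto; apply Hc; discriminate.
    apply B_diff; auto. apply (ideal_B I); auto.
  - intros x [H1 H2]. destruct (classic (ltE zeroE (c x))); [left|right]; auto.
Qed.

End SigmaPrincipal.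

(** * Necessity of σ-(.)-finiteness *)

Definition squash (b : ERp) : ERp :=
  match b with Fin x _ => mkE (x / (1 + x)) | Inf => mkE 1 end.

Lemma squash_nonneg x : 0 <= x -> 0 <= x / (1 + x).
Proof. intros. unfold Rdiv; apply Rmult_le_pos; [lra|left; apply Rinv_0_lt_compat; lra]. Qed.

Lemma squash_mono a b : leE a b -> leE (squash a) (squash b).
Proof.
  destruct a as [x p|], b as [y q|]; cbn [leE squash]; intros H; try contradiction.
  - pose proof (squash_nonneg x p). pose proof (squash_nonneg y q).
    rew_mkE. cbn [leE]. apply Rmult_le_reg_r with ((1 + x) * (1 + y)). nra.
    unfold Rdiv. replace (x * / (1 + x) * ((1 + x) * (1 + y))) with (x * (1 + y)) by (field; lra).
    replace (y * / (1 + y) * ((1 + x) * (1 + y))) with (y * (1 + x)) by (field; lra). nra.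
  - pose proof (squash_nonneg x p).
    rew_mkE. cbn [leE]. apply Rmult_le_reg_r with (1 + x). lra.
    unfold Rdiv. replace (x * / (1 + x) * (1 + x)) with x by (field; lra). lra.
  - apply leE_refl.
Qed.
Lemma squash_lt b : ltE zeroE b -> ltE (squash b) b.
Proof.
  destruct b as [x p|]; unfold zeroE; cbn [ltE squash]; intros H.
  - pose proof (squash_nonneg x p).
    rew_mkE. cbn [ltE]. apply Rmult_lt_reg_r with (1 + x). lra.
    unfold Rdiv. replace (x * / (1 + x) * (1 + x)) with x by (field; lra). nra.
  - rew_mkE. cbn [ltE]. auto.
Qed.
Lemma squash_pos b : ltE zeroE b -> ltE zeroE (squash b).
Proof.
  destruct b as [x p|]; unfold zeroE; cbn [ltE squash]; intros H.
  - apply mkE_pos. unfold Rdiv; apply Rmult_lt_0_compat; [lra|apply Rinv_0_lt_compat; lra].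
  - apply mkE_pos; lra.
Qed.
Lemma squash_0 : squash zeroE = zeroE.
Proof.
  unfold squash, zeroE. replace (0 / (1 + 0)) with 0 by field.
  unfold mkE. destruct (Rle_dec 0 0). apply Fin_eq; auto. lra.
Qed.

Section SigmaFinite.
Context {E : Type} (B : (E -> Prop) -> Prop) (HB : sigma_algebra B).
Context (op : ERp -> ERp -> ERp) (one : ERp) (Hpm : pseudo_mult op one).
Context (tau : (E -> Prop) -> ERp) (Htau : sigma_maxitive B tau).

(* Measurable sets covered by countably many measurable sets of (.)-finite [tau]-measure;
   they form a σ-ideal, and [tau] is σ-(.)-finite iff the whole space is such a set. *)
Definition sfin (A : E -> Prop) : Prop :=
  B A /\ exists Fs : nat -> E -> Prop,
    (forall n, B (Fs n) /\ ofinite op (tau (Fs n))) /\ (forall x, A x -> exists n, Fs n x).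

Lemma sfin_sub A C : B A -> sfin C -> (forall x, A x -> C x) -> sfin A.
Proof. intros HA [HC [Fs [H1 H2]]] Hs. split; auto. exists Fs. split; auto. Qed.

Lemma sfin_ofinite A : B A -> ofinite op (tau A) -> sfin A.
Proof.
  intros HA Ho. split; auto. exists (fun _ => A). split; auto. intros x Hx. exists O; auto.
Qed.

Lemma sfin_bigU F : (forall n, sfin (F n)) -> sfin (bigU F).
Proof.
  intros H. split.
  - apply B_bigU; auto. intros n; apply H.
  - destruct (choice _ (fun n => proj2 (H n))) as [G HG].
    exists (fun m => G (fst (Cantor.of_nat m)) (snd (Cantor.of_nat m))). split.
    + intros m. apply HG.
    + intros x [n Hx]. destruct (proj2 (HG n) x Hx) as [k Hk].
      exists (Cantor.to_nat (n, k)). rewrite Cantor.cancel_of_to. simpl. exact Hk.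
Qed.

Lemma sigma_ofinite_of_levels c : measurable B c -> (forall n, sfin (levels c n)) ->
  sigma_ofinite op B tau.
Proof.
  intros Hc Hl.
  destruct (sfin_sub (fun _ => True) (bigU (levels c)) (B_full B HB) (sfin_bigU _ Hl))
    as [_ [Fs [H1 H2]]].
  - intros x _. apply levels_cover.
  - exists Fs. split; auto.
Qed.

Definition below_O (w z : ERp) : Prop := forall s, ltE zeroE s -> leE z (op s w).

Lemma below_O_inf u o : is_infE (fun y => exists s, ltE zeroE s /\ y = op s u) o -> below_O u o.
Proof. intros Ho s Hs. apply Ho. eauto. Qed.

(** First case: the values [O(u)] of (.)-infinite [u] are bounded below by some [b > 0].
    The measure equal to [0] on [sfin] sets and to [squash b] elsewhere is then
    absolutely continuous. *)
Section Bounded.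
Variable b : ERp.
Hypothesis Hb : ltE zeroE b.
Hypothesis Hbound : forall u, ~ ofinite op u -> below_O u b.

Definition nu_ind (A : E -> Prop) : ERp :=
  if excluded_middle_informative (sfin A) then zeroE else squash b.

Lemma nu_ind_sfin A : sfin A -> nu_ind A = zeroE.
Proof. intros HA. unfold nu_ind. destruct (excluded_middle_informative _); tauto. Qed.
Lemma nu_ind_not_sfin A : ~ sfin A -> nu_ind A = squash b.
Proof. intros HA. unfold nu_ind. destruct (excluded_middle_informative _); tauto. Qed.

Lemma nu_ind_null A : nu_ind A = zeroE -> sfin A.
Proof.
  intros H. apply NNPP. intros Hn. rewrite (nu_ind_not_sfin _ Hn) in H.
  pose proof (squash_pos b Hb) as Hp. rewrite H in Hp. exact (ltE_irrefl _ Hp).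
Qed.

Lemma nu_ind_maxitive : sigma_maxitive B nu_ind.
Proof.
  split.
  - apply nu_ind_sfin. apply sfin_ofinite. apply B_empty; auto.
    rewrite (mx_empty B tau Htau). apply (ofinite_0 op one Hpm).
  - intros F HF. destruct (classic (sfin (bigU F))) as [HU|HU].
    + rewrite (nu_ind_sfin _ HU). split; [|intros; apply leE_0].
      intros y [n ->]. rewrite nu_ind_sfin. apply leE_refl.
      apply (sfin_sub _ _ (HF n) HU). intros x Hx; exists n; auto.
    + rewrite (nu_ind_not_sfin _ HU). split.
      * intros y [n ->]. destruct (classic (sfin (F n))) as [Hn|Hn].
        -- rewrite nu_ind_sfin by auto. apply leE_0.
        -- rewrite nu_ind_not_sfin by auto. apply leE_refl.
      * intros m' Hm'. destruct (classic (forall n, sfin (F n))) as [Hall|Hall].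
        -- exfalso. apply HU, sfin_bigU, Hall.
        -- apply not_all_ex_not in Hall. destruct Hall as [n Hn].
           rewrite <- (nu_ind_not_sfin _ Hn). apply Hm'. eauto.
Qed.

Lemma nu_ind_abs_cont : abs_cont op B nu_ind tau.
Proof. intros A HA Ho. rewrite nu_ind_sfin. apply leE_0. apply sfin_ofinite; auto. Qed.

Lemma RN_sigma_ofinite_bounded : RN_property op B tau -> sigma_ofinite op B tau.
Proof.
  intros HRN. destruct (HRN nu_ind nu_ind_maxitive nu_ind_abs_cont) as [c [Hc Hint]].
  apply (sigma_ofinite_of_levels c Hc). intros [|n]; simpl.
  - apply nu_ind_null. exact (density_zero_set B HB op one Hpm tau Htau nu_ind c Hc Hint).
  - apply NNPP. intros Hn.
    assert (Hno : ~ ofinite op (tau (level c n))) by (intros Ho; apply Hn, sfin_ofinite; auto;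
      apply level_B; auto).
    pose proof (density_level B op tau nu_ind c Hc Hint n) as H1.
    rewrite (nu_ind_not_sfin _ Hn) in H1.
    pose proof (Hbound _ Hno _ (mkE_pos _ (inv_S_pos n))) as H2.
    apply (ltE_irrefl b). eapply leE_lt_trans; [|exact (squash_lt b Hb)].
    eapply leE_trans; eauto.
Qed.

End Bounded.

(** Second case: no such bound.  The measure
    [nu A = sup { squash z | w < tau A, z <= O(w) }] is σ-maxitive, vanishes on sets of
    (.)-finite measure, and its vanishing forces (.)-finiteness. *)
Section Unbounded.
Hypothesis Hunbounded :
  ~ exists b, ltE zeroE b /\ forall u, ~ ofinite op u -> below_O u b.

Definition env_set (v y : ERp) : Prop := exists w z, ltE w v /\ below_O w z /\ y = squash z.
Definition nu_env (A : E -> Prop) : ERp := supE (env_set (tau A)).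

Lemma env_mono v v' : leE v v' -> leE (supE (env_set v)) (supE (env_set v')).
Proof.
  intros Hv. apply (supE_spec (env_set v)). intros y (w & z & Hw & Hz & ->).
  apply (supE_spec (env_set v')). exists w, z. split; auto. eapply ltE_le_trans; eauto.
Qed.

Lemma env_upper u o : is_infE (fun y => exists s, ltE zeroE s /\ y = op s u) o ->
  leE (supE (env_set u)) (squash o).
Proof.
  intros Ho. apply (supE_spec _). intros y (w & z & Hw & Hz & ->). apply squash_mono.
  apply Ho. intros y [s [Hs ->]]. apply leE_trans with (op s w).
  apply Hz, Hs. apply (op_monor op one Hpm), ltE_leE, Hw.
Qed.

Lemma nu_env_maxitive : sigma_maxitive B nu_env.
Proof.
  split.
  - apply leE_0_eq. unfold nu_env. rewrite (mx_empty B tau Htau). apply (supE_spec _).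
    intros y (w & z & Hw & _ & _). exfalso. apply (ltE_irrefl zeroE).
    eapply leE_lt_trans; [apply leE_0|exact Hw].
  - intros F HF. split.
    + intros y [n ->]. apply env_mono. apply (mx_ub B tau Htau); auto.
    + intros m' Hm'. unfold nu_env. apply (supE_spec _). intros y (w & z & Hw & Hz & ->).
      destruct (sup_lt _ _ _ (mx_sup B tau Htau F HF) Hw) as [y [[n ->] Hn]].
      eapply leE_trans; [|apply Hm'; exists n; reflexivity].
      apply (supE_spec _). exists w, z. auto.
Qed.

Lemma nu_env_abs_cont : abs_cont op B nu_env tau.
Proof.
  intros A HA Ho. eapply leE_trans; [|apply leE_0]. unfold nu_env. apply (supE_spec _).
  intros y (w & z & Hw & Hz & ->).
  assert (Hw0 : ofinite op w) by (eapply ofinite_down; eauto; apply ltE_leE; auto).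
  rewrite (ofinite_lb op w z Hw0 Hz), squash_0. apply leE_refl.
Qed.

(* Without a uniform bound, below every (.)-infinite [v] lies a (.)-infinite [w] whose
   envelope value is positive. *)
Lemma nu_env_null A : nu_env A = zeroE -> ofinite op (tau A).
Proof.
  intros HA. apply NNPP. intros Hu.
  destruct (inf_exists (fun y => exists s, ltE zeroE s /\ y = op s (tau A))) as [o Ho].
  pose proof (not_ofinite_lb op (tau A) o Hu Ho) as Ho0.
  destruct (classic (exists u' s, ~ ofinite op u' /\ ltE zeroE s /\ ltE (op s u') o))
    as [(u' & s & Hu' & Hs & Hsu)|Hn2].
  2:{ apply Hunbounded. exists o. split; auto. intros u Hu2 s Hs. apply leE_nlt.
      intros Hlt. apply Hn2. eauto. }
  assert (Hlt : ltE u' (tau A)).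
  { apply ltE_nle. intros Hle. apply (ltE_irrefl o). eapply leE_lt_trans; [|exact Hsu].
    apply leE_trans with (op s (tau A)). apply Ho. eauto. apply (op_monor op one Hpm); auto. }
  destruct (inf_exists (fun y => exists s, ltE zeroE s /\ y = op s u')) as [o' Ho'].
  assert (Hel : leE (squash o') (nu_env A)).
  { apply (supE_spec _). exists u', o'. repeat split; auto. apply below_O_inf; auto. }
  rewrite HA in Hel. apply (ltE_irrefl zeroE). eapply ltE_le_trans; [|exact Hel].
  apply squash_pos. exact (not_ofinite_lb op u' o' Hu' Ho').
Qed.

Lemma RN_sigma_ofinite_unbounded : RN_property op B tau -> sigma_ofinite op B tau.
Proof.
  intros HRN. destruct (HRN nu_env nu_env_maxitive nu_env_abs_cont) as [c [Hc Hint]].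
  apply (sigma_ofinite_of_levels c Hc). intros n. apply sfin_ofinite; [apply levels_B; auto|].
  destruct n as [|n]; simpl.
  - apply nu_env_null. exact (density_zero_set B HB op one Hpm tau Htau nu_env c Hc Hint).
  - apply NNPP. intros Hu.
    destruct (inf_exists (fun y => exists s, ltE zeroE s /\ y = op s (tau (level c n))))
      as [o Ho].
    assert (H3 : leE o (op (mkE (/ INR (S n))) (tau (level c n)))).
    { apply Ho. exists (mkE (/ INR (S n))). split; auto. apply mkE_pos, inv_S_pos. }
    pose proof (density_level B op tau nu_env c Hc Hint n) as H2.
    apply (ltE_irrefl o).
    eapply leE_lt_trans; [|apply (squash_lt o (not_ofinite_lb op _ o Hu Ho))].
    eapply leE_trans; [exact H3|]. eapply leE_trans; [exact H2|]. apply env_upper; auto.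
Qed.

End Unbounded.

Lemma RN_sigma_ofinite : RN_property op B tau -> sigma_ofinite op B tau.
Proof.
  destruct (classic (exists b, ltE zeroE b /\ forall u, ~ ofinite op u -> below_O u b))
    as [[b [Hb Hbound]]|Hunb].
  - apply (RN_sigma_ofinite_bounded b Hb Hbound).
  - apply (RN_sigma_ofinite_unbounded Hunb).
Qed.

End SigmaFinite.

(** * Rational grids and nested intervals *)

Definition qseq (n : nat) : R := INR (fst (Cantor.of_nat n)) / INR (S (snd (Cantor.of_nat n))).

Lemma qseq_nonneg n : 0 <= qseq n.
Proof.
  unfold qseq. apply Rmult_le_pos. apply pos_INR. left. apply Rinv_0_lt_compat, lt_0_INR. lia.
Qed.

Lemma qseq_dense a b : 0 <= a -> a < b -> exists n, a < qseq n < b.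
Proof.
  intros Ha Hab. destruct (exists_inv_lt (b - a) ltac:(lra)) as [N HN].
  set (d := INR (S N)). assert (Hd : 0 < d) by (apply lt_0_INR; lia).
  destruct (archimed (a * d)) as [H1 H2].
  assert (Hp : (0 <= up (a * d))%Z) by (apply le_IZR; simpl; nra).
  exists (Cantor.to_nat (Z.to_nat (up (a * d)), N)). unfold qseq.
  rewrite Cantor.cancel_of_to. simpl fst; simpl snd.
  fold d. rewrite INR_IZR_INZ, Z2Nat.id by auto.
  assert (Hinv : / d < b - a) by exact HN.
  split.
  - apply Rmult_lt_reg_r with d; auto. unfold Rdiv.
    rewrite Rmult_assoc, Rinv_l, Rmult_1_r by lra. lra.
  - apply Rmult_lt_reg_r with d; auto. unfold Rdiv.
    rewrite Rmult_assoc, Rinv_l, Rmult_1_r by lra.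
    assert (/ d * d = 1) by (field; lra).
    assert (1 < (b - a) * d) by (apply Rmult_lt_compat_r with (r := d) in Hinv; auto; lra).
    nra.
Qed.

Definition qE (n : nat) : ERp := mkE (qseq n).
Lemma qE_Fin n : qE n = Fin (qseq n) (qseq_nonneg n).
Proof. apply mkE_Fin. Qed.

Lemma exists_nat_gt y : 0 <= y -> exists n, y < INR (S n).
Proof.
  intros Hy. destruct (archimed y) as [H1 H2].
  assert (Hp : (0 <= up y)%Z) by (apply le_IZR; simpl; lra).
  exists (Z.to_nat (up y)). rewrite S_INR, INR_IZR_INZ, Z2Nat.id by auto. lra.
Qed.

Lemma exists_strip y : 0 < y -> exists j : nat, INR j < y < INR j + 2.
Proof.
  intros Hy. destruct (Rlt_dec y 1) as [H1|H1].
  - exists O. simpl. lra.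
  - destruct (archimed y) as [H2 H3].
    assert (Hz : (1 < up y)%Z) by (apply lt_IZR; simpl; lra).
    exists (Z.to_nat (up y - 2)). rewrite INR_IZR_INZ, Z2Nat.id by lia. rewrite minus_IZR.
    simpl. lra.
Qed.

Lemma trisection (f : R -> R -> ERp) (w : ERp) a0 b0 :
  0 <= a0 < b0 -> leE w (f a0 b0) ->
  (forall a b, 0 <= a < b -> leE w (f a b) ->
     leE w (f a (a + 2 * (b - a) / 3)) \/ leE w (f (a + (b - a) / 3) b)) ->
  exists a b : nat -> R,
    (forall k, 0 <= a k < b k /\ a k <= a (S k) /\ b (S k) <= b k /\ leE w (f (a k) (b k))) /\
    (forall eps, 0 < eps -> exists K, forall k, (K <= k)%nat -> b k - a k < eps).
Proof.
  intros Hab0 Hw0 Hsplit.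
  set (step := fun p : R * R =>
     if excluded_middle_informative (leE w (f (fst p) (fst p + 2 * (snd p - fst p) / 3)))
     then (fst p, fst p + 2 * (snd p - fst p) / 3) else (fst p + (snd p - fst p) / 3, snd p)).
  set (sq := fun k => Nat.iter k step (a0, b0)).
  assert (Hstep : forall p, 0 <= fst p < snd p -> leE w (f (fst p) (snd p)) ->
    0 <= fst (step p) < snd (step p) /\ fst p <= fst (step p) /\ snd (step p) <= snd p /\
    snd (step p) - fst (step p) = 2 / 3 * (snd p - fst p) /\ leE w (f (fst (step p)) (snd (step p)))).
  { intros [a b] Hab Hw. unfold step. simpl in *.
    destruct (excluded_middle_informative _) as [H|H]; simpl.
    - repeat split; auto; lra.
    - destruct (Hsplit a b Hab Hw) as [H'|H']; [contradiction|]. repeat split; auto; lra. }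
  assert (Hinv : forall k, 0 <= fst (sq k) < snd (sq k) /\
    snd (sq k) - fst (sq k) = (2/3)^k * (b0 - a0) /\ leE w (f (fst (sq k)) (snd (sq k)))).
  { induction k as [|k IH].
    - simpl. repeat split; auto; lra.
    - destruct IH as (I1 & I2 & I3). change (sq (S k)) with (step (sq k)).
      destruct (Hstep (sq k) I1 I3) as (S1 & _ & _ & S4 & S5).
      repeat split; auto; try lra. rewrite S4, I2. simpl. lra. }
  exists (fun k => fst (sq k)), (fun k => snd (sq k)). split.
  - intros k. destruct (Hinv k) as (I1 & _ & I3).
    destruct (Hstep (sq k) I1 I3) as (_ & S2 & S3 & _). repeat split; auto; lra.
  - intros eps He.
    destruct (pow_lt_1_zero (2/3) ltac:(rewrite Rabs_right; lra) (eps / (b0 - a0))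
                ltac:(apply Rdiv_lt_0_compat; lra)) as [N HN].
    exists N. intros k Hk. specialize (HN k Hk).
    rewrite Rabs_right in HN by (apply Rle_ge, pow_le; lra).
    destruct (Hinv k) as (_ & I2 & _). rewrite I2.
    apply Rmult_lt_compat_r with (r := b0 - a0) in HN; [|lra].
    replace (eps / (b0 - a0) * (b0 - a0)) with eps in HN by (field; lra). exact HN.
Qed.

Lemma nested_limit (a b : nat -> R) :
  (forall k, a k < b k /\ a k <= a (S k) /\ b (S k) <= b k) ->
  exists st, forall k, a k <= st /\ st <= b k.
Proof.
  intros H.
  assert (Ha : forall k k', (k <= k')%nat -> a k <= a k').
  { intros k k' Hk. induction Hk. lra. destruct (H m). lra. }
  assert (Hb : forall k k', (k <= k')%nat -> b k' <= b k).
  { intros k k' Hk. induction Hk. lra. destruct (H m). lra. }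
  assert (Hab : forall j k, a j < b k).
  { intros j k. destruct (H (Nat.max j k)) as [Hm _].
    pose proof (Ha j (Nat.max j k) ltac:(lia)). pose proof (Hb k (Nat.max j k) ltac:(lia)). lra. }
  destruct (completeness (fun x => exists k, x = a k)) as [st [Hst1 Hst2]].
  - exists (b O). intros x [k ->]. left. apply Hab.
  - exists (a O). eauto.
  - exists st. intros k. split.
    + apply Hst1. eauto.
    + apply Hst2. intros x [j ->]. left. apply Hab.
Qed.

(** * Sufficiency: construction of the density *)

Section Sufficiency.
Context {E : Type} (B : (E -> Prop) -> Prop) (HB : sigma_algebra B).
Context (op : ERp -> ERp -> ERp) (one : ERp) (Hpm : pseudo_mult op one).
Context (tau : (E -> Prop) -> ERp) (Htau : sigma_maxitive B tau).
Hypothesis Hfin : sigma_ofinite op B tau.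
Hypothesis Hpr : sigma_principal B tau.
Context (nu : (E -> Prop) -> ERp) (Hnu : sigma_maxitive B nu) (Hac : abs_cont op B nu tau).

Lemma null_of_abs_cont A : B A -> tau A = zeroE -> nu A = zeroE.
Proof.
  intros HA H0. apply leE_0_eq. eapply leE_trans. apply Hac; auto.
  rewrite H0. apply (ofinite_0 op one Hpm). rewrite H0, (op_0r op one Hpm). apply leE_refl.
Qed.

Definition dominated (n : nat) (A : E -> Prop) : Prop :=
  B A /\ forall A', B A' -> (forall x, A' x -> A x) -> leE (nu A') (op (qE n) (tau A')).

Lemma dominated_ideal n : sigma_ideal B (dominated n).
Proof.
  split; [|split; [|split]].
  - exists (fun _ => False). split. apply B_empty; auto. intros A' HA' Hs.
    apply leE_trans with (nu (fun _ => False)).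
    apply (mx_mono B nu Hnu); auto. apply B_empty; auto.
    rewrite (mx_empty B nu Hnu). apply leE_0.
  - intros A [H _]; auto.
  - intros F HF. split. apply B_bigU; auto. intros k; apply HF.
    intros A' HA' Hs.
    rewrite (mx_ext nu A' (bigU (fun k x => A' x /\ F k x))).
    2:{ intros x; split.
        - intros Hx. destruct (Hs x Hx) as [k Hk]. exists k; auto.
        - intros [k [H1 _]]; auto. }
    apply (mx_least B nu Hnu). intros k; apply B_inter; auto; apply HF.
    intros k. apply leE_trans with (op (qE n) (tau (fun x => A' x /\ F k x))).
    + apply (proj2 (HF k)). apply B_inter; auto; apply HF. intros x [_ H]; auto.
    + apply (op_monor op one Hpm). apply (mx_mono B tau Htau); auto.
      apply B_inter; auto; apply HF. intros x [H _]; auto.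
  - intros A C HA [HC H] Hs. split; auto.
Qed.

Lemma dominated_mono n m A : qseq n <= qseq m -> dominated n A -> dominated m A.
Proof.
  intros Hr [HA H]. split; auto. intros A' HA' Hs. eapply leE_trans. apply H; auto.
  apply (op_monol op one Hpm). rewrite !qE_Fin. cbn [leE]. auto.
Qed.

Definition Lmax (n : nat) : E -> Prop :=
  proj1_sig (constructive_indefinite_description _ (Hpr _ (dominated_ideal n))).
Lemma Lmax_spec n : dominated n (Lmax n) /\
  forall Z, dominated n Z -> negligible B tau (fun x => Z x /\ ~ Lmax n x).
Proof. unfold Lmax. destruct (constructive_indefinite_description _ _). auto. Qed.

(* The set where the density will be at most [q_n]. *)
Definition sublevel (n : nat) : E -> Prop :=
  bigU (fun m x => qseq m <= qseq n /\ Lmax m x).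

Lemma sublevel_B n : B (sublevel n).
Proof.
  unfold sublevel. apply B_bigU; auto. intros m.
  apply (B_ext B) with (fun x => (fun _ => qseq m <= qseq n) x /\ Lmax m x).
  intros; tauto. apply B_inter; auto. apply B_const; auto. apply (proj1 (Lmax_spec m)).
Qed.

Lemma sublevel_dominated n : dominated n (sublevel n).
Proof.
  destruct (dominated_ideal n) as (_ & _ & Hunion & Hsub).
  apply Hunion. intros m. destruct (Rle_dec (qseq m) (qseq n)) as [Hr|Hr].
  - apply Hsub with (Lmax m).
    + apply (B_ext B) with (fun x => (fun _ => qseq m <= qseq n) x /\ Lmax m x). intros; tauto.
      apply B_inter; auto. apply B_const; auto. apply (proj1 (Lmax_spec m)).
    + apply (dominated_mono m n); auto. apply Lmax_spec.
    + intros x [_ H]; auto.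
  - apply Hsub with (fun _ => False).
    + apply (B_ext B) with (fun _ => False). intros; tauto. apply B_empty; auto.
    + apply (ideal_empty B HB). apply dominated_ideal.
    + intros x [H _]; contradiction.
Qed.

Lemma sublevel_mono n n' x : qseq n <= qseq n' -> sublevel n x -> sublevel n' x.
Proof. intros Hr [m [H1 H2]]. exists m. split; auto. lra. Qed.

Lemma sublevel_ess n Z : dominated n Z -> negligible B tau (fun x => Z x /\ ~ sublevel n x).
Proof.
  intros HZ. destruct (proj2 (Lmax_spec n) Z HZ) as [C [HC1 [HC2 HC3]]].
  exists C. split; auto. split; auto. intros x [H1 H2]. apply HC3. split; auto.
  intros H3. apply H2. exists n. split; auto. lra.
Qed.

Definition dens (x : E) : ERp := infE (fun y => exists n, sublevel n x /\ y = qE n).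

Lemma dens_lt x b : ltE (dens x) b -> exists n, sublevel n x /\ ltE (qE n) b.
Proof. intros H. destruct (inf_gt _ _ _ (infE_spec _) H) as [y [[n [Hn ->]] Hy]]. eauto. Qed.
Lemma dens_le x n : sublevel n x -> leE (dens x) (qE n).
Proof. intros H. apply (infE_spec _). eauto. Qed.

Lemma dens_meas : measurable B dens.
Proof.
  intros [t0 p|] Ht; [|congruence].
  apply (B_ext B) with (bigU (fun m x => t0 < qseq m /\ ~ sublevel m x)).
  - intros x. split.
    + intros [m [H1 H2]]. apply ltE_nle. intros Hle.
      assert (Hl : ltE (dens x) (qE m))
        by (eapply leE_lt_trans; [exact Hle|]; rewrite qE_Fin; cbn [ltE]; auto).
      destruct (dens_lt x _ Hl) as [n [Hn Hnm]]. rewrite !qE_Fin in Hnm. cbn [ltE] in Hnm.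
      apply H2. apply (sublevel_mono n); auto. lra.
    + intros H. destruct (dens x) as [y q|] eqn:Hc.
      * cbn [ltE] in H. destruct (qseq_dense t0 y p H) as [m Hm]. exists m. split; [lra|].
        intros HM. pose proof (dens_le x m HM) as H2. rewrite Hc, qE_Fin in H2.
        cbn [leE] in H2. lra.
      * destruct (qseq_dense t0 (t0 + 1) p ltac:(lra)) as [m Hm]. exists m. split; [lra|].
        intros HM. pose proof (dens_le x m HM) as H2. rewrite Hc, qE_Fin in H2.
        cbn [leE] in H2. auto.
  - apply B_bigU; auto. intros m. apply B_inter; auto. apply B_const; auto.
    apply B_compl; auto. apply sublevel_B.
Qed.

Lemma B_dens_lt b : 0 < b -> B (fun x => ltE (dens x) (mkE b)).
Proof.
  intros Hb. apply (B_ext B) with (bigU (fun n x => ~ ltE (mkE (b - / INR (S n))) (dens x))).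
  - intros x. split.
    + intros [n Hn]. apply leE_nlt in Hn. eapply leE_lt_trans; [exact Hn|].
      pose proof (inv_S_pos n). unfold mkE at 1. destruct (Rle_dec 0 (b - / INR (S n))).
      * rew_mkE. cbn [ltE]. lra.
      * rew_mkE. unfold zeroE. cbn [ltE]. lra.
    + intros H. destruct (dens x) as [y q|] eqn:Hc.
      * rew_mkE_in H. cbn [ltE] in H. destruct (exists_inv_lt (b - y) ltac:(lra)) as [k Hk].
        exists k. rewrite Hc. apply leE_nlt. rew_mkE. cbn [leE]. lra.
      * rew_mkE_in H. cbn [ltE] in H. contradiction.
  - apply B_bigU; auto. intros n. apply B_compl; auto. apply dens_meas, mkE_notInf.
Qed.

Lemma B_dens_Inf : B (fun x => dens x = Inf).
Proof.
  apply (B_ext B) with (fun x => ~ bigU (fun n x => ltE (dens x) (mkE (INR (S n)))) x).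
  - intros x. split.
    + intros H. destruct (dens x) as [y q|] eqn:Hc; auto. exfalso. apply H.
      destruct (exists_nat_gt y q) as [n Hn]. exists n. rewrite Hc.
      assert (0 <= INR (S n)) by apply pos_INR. rew_mkE. cbn [ltE]. auto.
    + intros H [n Hn]. rewrite H in Hn. assert (0 <= INR (S n)) by apply pos_INR.
      rew_mkE_in Hn. cbn [ltE] in Hn. auto.
  - apply B_compl; auto. apply B_bigU; auto. intros n. apply B_dens_lt. apply lt_0_INR. lia.
Qed.

Lemma upper_on_sublevel H b : 0 <= b -> B H -> (forall x, H x -> ltE (dens x) (mkE b)) ->
  leE (nu H) (op (mkE b) (tau H)).
Proof.
  intros Hb HH Hs.
  rewrite (mx_ext nu H (bigU (fun n x => H x /\ sublevel n x /\ qseq n < b))).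
  2:{ intros x; split.
      - intros Hx. destruct (dens_lt x _ (Hs x Hx)) as [n [Hn Hnb]].
        exists n. repeat split; auto. rewrite qE_Fin in Hnb. rew_mkE_in Hnb. exact Hnb.
      - intros [n [Hx _]]; auto. }
  assert (HBn : forall n, B (fun x => H x /\ sublevel n x /\ qseq n < b)).
  { intros n. apply B_inter; auto. apply B_inter; auto. apply sublevel_B. apply B_const; auto. }
  apply (mx_least B nu Hnu); auto.
  intros n. eapply leE_trans.
  { apply (proj2 (sublevel_dominated n)); auto. intros x [_ [Hx _]]; auto. }
  destruct (classic (qseq n < b)) as [Hr|Hr].
  - apply (op_mono op one Hpm).
    + rewrite qE_Fin. rew_mkE. cbn [leE]. lra.
    + apply (mx_mono B tau Htau); auto. intros x [Hx _]; auto.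
  - rewrite (mx_ext tau _ (fun _ => False)) by (intros x; cbv beta; tauto).
    rewrite (mx_empty B tau Htau), (op_0r op one Hpm). apply leE_0.
Qed.

Definition heavy (r : ERp) (G H : E -> Prop) : Prop :=
  B H /\ exists H', B H' /\ (forall x, H x -> H' x) /\ (forall x, H' x -> G x) /\
                    leE (op r (tau H')) (nu H').

Lemma heavy_ideal r G : pos_finite r -> sigma_ideal B (heavy r G).
Proof.
  intros Hr. split; [|split; [|split]].
  - exists (fun _ => False). split. apply B_empty; auto. exists (fun _ => False).
    split. apply B_empty; auto. split. auto. split. intros x [].
    rewrite (mx_empty B tau Htau), (op_0r op one Hpm). apply leE_0.
  - intros H [HH _]; auto.
  - intros F HF. split. apply B_bigU; auto. intros k; apply HF.
    destruct (choice _ (fun k => proj2 (HF k))) as [Hk HHk].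
    exists (bigU Hk). split. apply B_bigU; auto. intros k; apply HHk.
    split. intros x [k Hx]. exists k. apply HHk; auto.
    split. intros x [k Hx]. eapply HHk; eauto.
    apply (op_sup_r_least op one Hpm r (fun y => exists k, y = tau (Hk k))); auto.
    + apply (mx_sup B tau Htau). intros k; apply HHk.
    + exists (tau (Hk O)); eauto.
    + intros y [k ->]. eapply leE_trans. apply HHk. apply (mx_ub B nu Hnu). intros j; apply HHk.
  - intros A0 C HA0 [HC [H' [H1 [H2 [H3 H4]]]]] Hs. split; auto. exists H'. split; auto.
Qed.

(* An essential heavy set [H'] of [G] exhausts [G] up to a [tau]-null set, since what is
   left is dominated at level [n] but lies outside [sublevel n]. *)
Lemma lower_bound_rational n G : 0 < qseq n -> B G -> (forall x, G x -> ltE (qE n) (dens x)) ->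
  leE (op (qE n) (tau G)) (nu G).
Proof.
  intros Hq HBG HGc.
  assert (Hrpos : pos_finite (qE n)) by (rewrite qE_Fin; exact Hq).
  destruct (Hpr _ (heavy_ideal (qE n) G Hrpos)) as [L [HL HLess]].
  destruct HL as [HBL [H' [HBH' [HLH' [HH'G HH'op]]]]].
  set (G' := fun x => G x /\ ~ L x).
  assert (HBG' : B G') by (apply B_diff; auto).
  assert (Hgood : dominated n G').
  { split; auto. intros A' HA' Hs. apply leE_nlt. intros Hbad.
    assert (HJA : heavy (qE n) G A').
    { split; auto. exists A'. repeat split; auto. intros x Hx; apply Hs; auto.
      apply ltE_leE; auto. }
    destruct (HLess A' HJA) as [C2 [HC2 [HC20 HC2s]]].
    assert (Hz : tau A' = zeroE).
    { apply (mx_null_sub B tau Htau A' C2); auto. intros x Hx. apply HC2s. split; auto.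
      apply Hs; auto. }
    rewrite (null_of_abs_cont A' HA' Hz), Hz, (op_0r op one Hpm) in Hbad.
    exact (ltE_irrefl _ Hbad). }
  destruct (sublevel_ess n G' Hgood) as [C [HC [HC0 HCs]]].
  assert (HG'0 : tau G' = zeroE).
  { apply (mx_null_sub B tau Htau G' C); auto. intros x Hx. apply HCs. split; auto.
    intros HM. destruct Hx as [Hx _].
    exact (ltE_irrefl _ (ltE_le_trans _ _ _ (HGc x Hx) (dens_le x n HM))). }
  assert (HGH : leE (tau G) (tau H')).
  { apply leE_trans with (tau (fun x => G' x \/ H' x)).
    - apply (mx_mono B tau Htau); auto. apply B_union; auto.
      intros x Hx. destruct (classic (L x)); [right; auto|left; split; auto].
    - apply (mx_union_least B tau Htau); auto. rewrite HG'0; apply leE_0. apply leE_refl. }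
  eapply leE_trans. apply (op_monor op one Hpm), HGH.
  eapply leE_trans. exact HH'op. apply (mx_mono B nu Hnu); auto.
Qed.

(* Lower bound: every term of the integral of [dens] is below [nu A]; the real level [t]
   is approached from below by rationals, using left continuity of [- (.) u]. *)
Lemma lower_bound A t : B A -> t <> Inf ->
  leE (op t (tau (fun x => A x /\ ltE t (dens x)))) (nu A).
Proof.
  intros HA Ht.
  set (G := fun x => A x /\ ltE t (dens x)).
  assert (HBG : B G) by (apply B_inter; auto; apply dens_meas; auto).
  apply leE_trans with (nu G); [| apply (mx_mono B nu Hnu); auto; intros x [H _]; auto].
  apply leE_nlt. intros Hlt.
  destruct t as [t0 p|]; [|congruence].
  destruct (Req_dec t0 0) as [Ht0|Ht0].
  { subst t0. replace (Fin 0 p) with zeroE in Hlt by (apply Fin_eq; auto).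
    rewrite (op_0l op one Hpm) in Hlt. exact (ltE_irrefl _ (leE_lt_trans _ _ _ (leE_0 _) Hlt)). }
  destruct (op_left_open op one Hpm (Fin t0 p) (tau G) (nu G)
              ltac:(unfold zeroE; cbn [ltE]; lra) Hlt) as [U [HU HUs]].
  cbn [nbhd] in HU. destruct HU as [eps [He Heps]].
  pose proof (Rmax_l (t0 - eps) 0). pose proof (Rmax_r (t0 - eps) 0).
  destruct (qseq_dense (Rmax (t0 - eps) 0) t0 (Rmax_r _ _) ltac:(apply Rmax_lub_lt; lra))
    as [n [Hn1 Hn2]].
  assert (Hr : ltE (nu G) (op (qE n) (tau G))).
  { apply HUs; rewrite qE_Fin. apply Heps. rewrite Rabs_left1; lra.
    unfold zeroE; cbn [ltE]. lra. }
  apply (ltE_irrefl (nu G)). eapply ltE_le_trans; [exact Hr|].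
  apply lower_bound_rational; auto; [lra|].
  intros x [_ Hx]. eapply leE_lt_trans; [|exact Hx]. rewrite qE_Fin. cbn [leE]. lra.
Qed.

Definition piece (A : E -> Prop) (a b : R) : E -> Prop :=
  fun x => A x /\ ltE (mkE a) (dens x) /\ ltE (dens x) (mkE b).

Lemma piece_B A a b : B A -> 0 < b -> B (piece A a b).
Proof.
  intros HA Hb. unfold piece. apply B_inter; auto. apply B_inter; auto.
  apply dens_meas, mkE_notInf. apply B_dens_lt; auto.
Qed.

Lemma piece_sub A a b a' b' : 0 <= a -> a <= a' -> b' <= b -> 0 <= b' ->
  forall x, piece A a' b' x -> piece A a b x.
Proof.
  intros H1 H2 H3 H4 x [Hx [Ha Hb]]. split; auto. split.
  - eapply leE_lt_trans; [|exact Ha]. rew_mkE. cbn [leE]. auto.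
  - eapply ltE_le_trans; [exact Hb|]. rew_mkE. cbn [leE]. auto.
Qed.

(* A piece is the union of its two overlapping two-thirds subpieces. *)
Lemma piece_split A w a b : B A -> 0 <= a < b -> leE w (nu (piece A a b)) ->
  leE w (nu (piece A a (a + 2 * (b - a) / 3))) \/ leE w (nu (piece A (a + (b - a) / 3) b)).
Proof.
  intros HA Hab Hw.
  assert (HBl : B (piece A a (a + 2 * (b - a) / 3))) by (apply piece_B; auto; lra).
  assert (HBr : B (piece A (a + (b - a) / 3) b)) by (apply piece_B; auto; lra).
  assert (Hu : leE w (nu (fun x => piece A a (a + 2 * (b - a) / 3) x \/
                                  piece A (a + (b - a) / 3) b x))).
  { eapply leE_trans; [exact Hw|]. apply (mx_mono B nu Hnu); auto.
    apply piece_B; auto; lra. apply B_union; auto.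
    intros x [Hx [H1 H2]]. destruct (dens x) as [y q|] eqn:Hc.
    - destruct (Rlt_dec y (a + 2 * (b - a) / 3)).
      + left. split; auto. rewrite Hc. split; auto. rew_mkE. cbn [ltE]. auto.
      + right. split; auto. rewrite Hc. split; auto. rew_mkE. cbn [ltE]. lra.
    - rew_mkE_in H2. cbn [ltE] in H2. contradiction. }
  destruct (leE_total (nu (piece A a (a + 2 * (b - a) / 3))) (nu (piece A (a + (b - a) / 3) b)))
    as [Hlr|Hrl]; [right|left]; eapply leE_trans; try exact Hu;
    apply (mx_union_least B nu Hnu); auto; apply leE_refl.
Qed.

Section UpperBound.
Variables (A : E -> Prop) (m : ERp).
Hypothesis HA : B A.
Hypothesis Hof : ofinite op (tau A).
Hypothesis Hm : forall t, t <> Inf -> leE (op t (tau (fun x => A x /\ ltE t (dens x)))) m.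

Lemma upper_zero_part : nu (fun x => A x /\ zero_set dens x) = zeroE.
Proof.
  set (Zs := fun x => A x /\ zero_set dens x).
  assert (HBZ : B Zs) by (apply B_inter; auto; apply zero_set_B; auto; apply dens_meas).
  apply (ofinite_lb op (tau A) (nu Zs) Hof). intros s Hs.
  assert (Hsub : forall b, 0 < b -> forall x, Zs x -> ltE (dens x) (mkE b)).
  { intros b Hb x [_ Hx]. apply leE_nlt in Hx. eapply leE_lt_trans; [exact Hx|].
    rew_mkE. unfold zeroE. cbn [ltE]. lra. }
  assert (HtZ : leE (tau Zs) (tau A))
    by (apply (mx_mono B tau Htau); auto; intros x [Hx _]; auto).
  destruct s as [s0 q|].
  - unfold zeroE in Hs. cbn [ltE] in Hs.
    eapply leE_trans. apply (upper_on_sublevel Zs s0 q HBZ (Hsub s0 Hs)).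
    apply (op_mono op one Hpm); auto. rewrite (mkE_Fin s0 q). apply leE_refl.
  - eapply leE_trans. apply (upper_on_sublevel Zs 1 ltac:(lra) HBZ (Hsub 1 ltac:(lra))).
    apply (op_mono op one Hpm); auto. apply leE_Inf.
Qed.

Lemma upper_infinite_part : leE (nu (fun x => A x /\ dens x = Inf)) m.
Proof.
  set (P1 := fun x => A x /\ dens x = Inf).
  assert (HB1 : B P1) by (apply B_inter; auto; apply B_dens_Inf).
  assert (Hof1 : ofinite op (tau P1)).
  { apply (ofinite_down op one Hpm) with (tau A); auto.
    apply (mx_mono B tau Htau); auto. intros x [Hx _]; auto. }
  eapply leE_trans; [exact (Hac P1 HB1 Hof1)|]. apply (op_Inf_le op one Hpm).
  intros s Hs. eapply leE_trans; [|exact (Hm s Hs)].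
  apply (op_monor op one Hpm). apply (mx_mono B tau Htau); auto.
  - apply B_inter; auto. apply dens_meas; auto.
  - intros x [Hx Hc]. split; auto. rewrite Hc. destruct s; cbn [ltE]; auto.
Qed.

(* On a piece, the trisection lemma yields nested intervals [a_k, b_k] on which [nu]
   stays above [w]; by [upper_on_sublevel] and the hypothesis on [m], the squeeze
   principle applies. *)
Lemma upper_piece a0 b0 : 0 <= a0 < b0 -> leE (nu (piece A a0 b0)) m.
Proof.
  intros Hab0. apply leE_nlt. intros Hw.
  set (w := nu (piece A a0 b0)) in *.
  destruct (trisection (fun a b => nu (piece A a b)) w a0 b0 Hab0 (leE_refl w)
              (fun a b Hab Hw' => piece_split A w a b HA Hab Hw')) as (a & b & Hinv & Hconv).
  destruct (nested_limit a b) as [st Hst].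
  { intros k. destruct (Hinv k) as (I1 & I2 & I3 & _). repeat split; auto; lra. }
  set (u := fun k => tau (piece A (a k) (b k))).
  assert (HBpk : forall k, B (piece A (a k) (b k))).
  { intros k. destruct (Hinv k) as (I1 & _). apply piece_B; auto; lra. }
  apply (op_squeeze op one Hpm a b st u (tau A) w m); auto.
  - intros k. destruct (Hinv k) as (I1 & _). destruct (Hst k). repeat split; lra.
  - intros k. apply (mx_mono B tau Htau); auto.
    destruct (Hinv k) as (I1 & I2 & I3 & _). destruct (Hinv (S k)) as (J1 & _).
    apply piece_sub; auto; lra.
  - intros k. apply (mx_mono B tau Htau); auto. intros x [Hx _]; auto.
  - intros k. destruct (Hinv k) as (I1 & _ & _ & I4). eapply leE_trans; [exact I4|].
    apply upper_on_sublevel; auto. lra. intros x [_ [_ Hx]]; auto.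
  - intros k. eapply leE_trans; [|apply (Hm (mkE (a k)) (mkE_notInf _))].
    apply (op_monor op one Hpm). apply (mx_mono B tau Htau); auto.
    + apply B_inter; auto. apply dens_meas, mkE_notInf.
    + intros x [Hx [Ha _]]. split; auto.
Qed.

Lemma upper_fin : leE (nu A) m.
Proof.
  set (P := fun k => match k with
    | O => fun x => A x /\ zero_set dens x
    | S O => fun x => A x /\ dens x = Inf
    | S (S j) => piece A (INR j) (INR j + 2) end).
  assert (HBP : forall k, B (P k)).
  { intros [|[|j]]; simpl.
    - apply B_inter; auto. apply zero_set_B; auto. apply dens_meas.
    - apply B_inter; auto. apply B_dens_Inf.
    - apply piece_B; auto. pose proof (pos_INR j). lra. }
  rewrite (mx_ext nu A (bigU P)).
  - apply (mx_least B nu Hnu); auto. intros [|[|j]]; simpl.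
    + rewrite upper_zero_part. apply leE_0.
    + apply upper_infinite_part.
    + apply upper_piece. pose proof (pos_INR j). lra.
  - intros x; split.
    + intros Hx. destruct (classic (ltE zeroE (dens x))) as [Hc|Hc].
      * destruct (dens x) as [y q|] eqn:Hcx.
        -- unfold zeroE in Hc. cbn [ltE] in Hc. destruct (exists_strip y Hc) as [j Hj].
           exists (S (S j)). simpl. split; auto. rewrite Hcx. pose proof (pos_INR j).
           split; rew_mkE; cbn [ltE]; lra.
        -- exists 1%nat. split; auto.
      * exists O. split; auto.
    + intros [[|[|j]] Hk]; apply Hk.
Qed.

End UpperBound.

(* By σ-(.)-finiteness, the upper bound extends to all measurable sets. *)
Lemma upper A m : B A ->
  (forall t, t <> Inf -> leE (op t (tau (fun x => A x /\ ltE t (dens x)))) m) -> leE (nu A) m.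
Proof.
  intros HA Hm. destruct Hfin as [Fs [HFs Hcov]].
  rewrite (mx_ext nu A (bigU (fun k x => A x /\ Fs k x))).
  2:{ intros x; split.
      - intros Hx. destruct (Hcov x) as [k Hk]. exists k; auto.
      - intros [k [Hx _]]; auto. }
  assert (HBk : forall k, B (fun x => A x /\ Fs k x)) by (intros k; apply B_inter; auto; apply HFs).
  apply (mx_least B nu Hnu); auto. intros k. apply upper_fin; auto.
  - apply (ofinite_down op one Hpm) with (tau (Fs k)); [|apply HFs].
    apply (mx_mono B tau Htau); auto. apply HFs. intros x [_ Hx]; auto.
  - intros t Ht. eapply leE_trans; [|apply (Hm t Ht)]. apply (op_monor op one Hpm).
    apply (mx_mono B tau Htau); try (apply B_inter; auto; apply dens_meas; auto).
    intros x [[Hx _] Hc]; auto.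
Qed.

Lemma dens_is_density : has_density op B nu tau.
Proof.
  exists dens. split. apply dens_meas. intros A HA. split.
  - intros y [t [Ht ->]]. apply lower_bound; auto.
  - intros m' Hm'. apply upper; auto. intros t Ht. apply Hm'. eauto.
Qed.

End Sufficiency.

Theorem mainTheorem1 (op : ERp -> ERp -> ERp) (one : ERp)
  (E : Type) (B : (E -> Prop) -> Prop) (tau : (E -> Prop) -> ERp) :
  pseudo_mult op one -> nondegenerate op one ->
  inhabited E -> sigma_algebra B -> sigma_maxitive B tau ->
  (RN_property op B tau <-> sigma_ofinite op B tau /\ sigma_principal B tau).
Proof.
  intros Hpm _ _ HB Htau. split.
  - intros HRN. split.
    + exact (RN_sigma_ofinite B HB op one Hpm tau Htau HRN).
    + exact (RN_sigma_principal B HB op one Hpm tau Htau HRN).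
  - intros [Hfin Hpr] nu Hnu Hac.
    exact (dens_is_density B HB op one Hpm tau Htau Hfin Hpr nu Hnu Hac).
Qed.
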